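(* The set of points of exact period $3$ under $G$ lies on the curve $1+v+uv=0$ (i.e. $v=-1/(1+u)$), and the Zariski closure in $\mathbb{C}^2$ of this set is this curve (the equation of period three orbits on the $(u,v)$-plane is $v=-1/(1+u)$).
   Context: Let \[ G(u,v)=\left(\frac{-u+v+uv}{u},\ \frac{u^{2}-u+v-u^{2}v-uv+uv^{2}+v^{2}}{u}\right), \] defined for $(u,v)\in\mathbb{C}^2$ with $u\neq 0$. A point $(u,v)$ has exact period $n$ under $G$ if the iterates $G^k(u,v)$, $0\le k\le n-1$, all have nonzero first coordinate, $G^n(u,v)=(u,v)$, and $G^k(u,v)\neq(u,v)$ for $0<k<n$. *)

From HB Require Import structures.
From mathcomp Require Import all_boot all_algebra.
From mathcomp Require Import complex.
From mathcomp Require Import Rstruct.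
From mathcomp Require Import mpoly.
From Stdlib Require Import Reals.
Set Implicit Arguments. Unset Strict Implicit. Unset Printing Implicit Defensive.
Import GRing.Theory.
Local Open Scope ring_scope.

Definition Cx : Type := complex R.

(* The map G (total function; only used where the first coordinate is nonzero). *)
Definition G (p : Cx * Cx) : Cx * Cx :=
  let u := p.1 in let v := p.2 in
  ((- u + v + u * v) / u,
   (u ^+ 2 - u + v - u ^+ 2 * v - u * v + u * v ^+ 2 + v ^+ 2) / u).

Definition exact_period (n : nat) (p : Cx * Cx) : Prop :=
  [/\ (forall k : nat, leq k.+1 n -> (iter k G p).1 != 0),
      iter n G p = p &
      (forall k : nat, leq 1 k -> leq k.+1 n -> iter k G p != p)].

Definition pt (p : Cx * Cx) : 'I_2 -> Cx :=
  fun i => if val i == 0%N then p.1 else p.2.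

Definition zariski_closure (S : Cx * Cx -> Prop) (x : Cx * Cx) : Prop :=
  forall f : {mpoly Cx[2]}, (forall p, S p -> f.@[pt p] = 0) -> f.@[pt x] = 0.

From mathcomp Require Import all_boot all_algebra complex Rstruct mpoly ring.
Set Implicit Arguments.
Unset Strict Implicit.
Unset Printing Implicit Defensive.

Import GRing.Theory Num.Theory.
Local Open Scope ring_scope.

(* Write t = v - u.  One step of G gives t' = t u' and u' u = t (1 + u) + u^2.
   The diagonal t = 0 is fixed, so along a 3-cycle t <> 0 and the first
   relation forces u0 u1 u2 = 1; eliminating t between the second relations
   then leaves 1 + u0 + u0 u1 = 0, which is 1 + v0 + u0 v0 = 0.
   Conversely s |-> (s - 1, -1/s) parametrises the curve, and G acts on the
   parameter by the Moebius map s |-> 1/(1 - s) of order three, whose fixed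
   points are the roots of s^2 - s + 1; so the parameters s = 2, 3, ... give
   points of exact period 3.  A polynomial vanishing at them becomes, once the
   pole at s = 0 is cleared, a polynomial in s with infinitely many roots, so
   it vanishes on the whole curve. *)

Lemma three_cycle_relation (F : fieldType) (t u0 u1 u2 : F) :
  2 != 0 :> F -> t != 0 -> u1 != 0 -> u2 != 0 -> u0 * u1 * u2 = 1 ->
  u1 * u0 = t * (1 + u0) + u0 ^+ 2 ->
  u2 * u1 = t * u1 * (1 + u1) + u1 ^+ 2 ->
  u0 * u2 = t * u1 * u2 * (1 + u2) + u2 ^+ 2 ->
  1 + u0 + u0 * u1 = 0.
Proof.
move=> h2 ht hu1 hu2 h012 e0 e1 e2.
have {}h012 : u0 * u1 * u2 - 1 = 0 by rewrite h012 subrr.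
have {}e0 : u1 * u0 - (t * (1 + u0) + u0 ^+ 2) = 0 by rewrite e0 subrr.
have {}e1 : u2 - (t * (1 + u1) + u1) = 0.
  by apply: (mulIf hu1); rewrite mul0r mulrBl e1; ring.
have {}e2 : u0 - (t * u1 * (1 + u2) + u2) = 0.
  by apply: (mulIf hu2); rewrite mul0r mulrBl e2; ring.
have : 2 * t * (1 + u0 + u0 * u1) = - t * (u0 * u1 * u2 - 1)
    - (u1 * u0 - (t * (1 + u0) + u0 ^+ 2))
    - u0 * (u2 - (t * (1 + u1) + u1) + (u0 - (t * u1 * (1 + u2) + u2))).
  by ring.
rewrite h012 e0 e1 e2 addr0 !mulr0 !subr0 => /eqP.
by rewrite !mulf_eq0 (negbTE h2) (negbTE ht) => /eqP.
Qed.

Definition rot3 {F : fieldType} (s : F) : F := (1 - s)^-1.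

Lemma rot3_neq0 (F : fieldType) (s : F) : s != 1 -> rot3 s != 0.
Proof. by move=> hs; rewrite invr_eq0 subr_eq0 eq_sym. Qed.

Lemma rot3_neq1 (F : fieldType) (s : F) : s != 0 -> rot3 s != 1.
Proof.
by move=> hs; rewrite /rot3 invr_eq1 -subr_eq0 addrAC subrr add0r oppr_eq0.
Qed.

Lemma rot3_rot3 (F : fieldType) (s : F) :
  s != 0 -> s != 1 -> rot3 (rot3 s) = (s - 1) / s.
Proof.
move=> h0 h1; have h1' : 1 - s != 0 by rewrite subr_eq0 eq_sym.
by rewrite /rot3; field; rewrite h0 h1' addrAC subrr add0r oppr_eq0.
Qed.

Lemma rot3_cycle (F : fieldType) (s : F) :
  s != 0 -> s != 1 -> rot3 (rot3 (rot3 s)) = s.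
Proof.
move=> h0 h1; rewrite (rot3_rot3 h0 h1) /rot3; field.
by rewrite h0 opprB addrC subrK oner_neq0.
Qed.

Lemma rot3_fixed (F : fieldType) (s : F) :
  s != 1 -> rot3 s = s -> s ^+ 2 - s + 1 = 0.
Proof.
move=> h1 e; have h1' : 1 - s != 0 by rewrite subr_eq0 eq_sym.
have : s * (1 - s) = 1 by rewrite -{1}e mulVf.
by move=> <-; ring.
Qed.

Definition clear_pole (F : fieldType) (f : {mpoly F[2]}) (a b : {poly F}) :
    {poly F} :=
  \sum_(m <- msupp f)
     f@_m *: (a ^+ m ord0 * b ^+ m ord_max * 'X^(msize f - m ord_max)).

Lemma horner_clear_pole (F : fieldType) (f : {mpoly F[2]}) (a b : {poly F})
    (s : F) (x : 'I_2 -> F) :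
  s != 0 -> x ord0 = a.[s] -> x ord_max = b.[s] / s ->
  (clear_pole f a b).[s] = s ^+ msize f * f.@[x].
Proof.
move=> hs x0 x1; rewrite mevalE horner_sum mulr_sumr.
apply: eq_big_seq => m fm.
have le_m1 : (m ord_max <= msize f)%N.
  apply: leq_trans (ltnW (msize_mdeg_lt fm)).
  by rewrite mdegE big_ord_recr /= leq_addl.
have -> : \prod_(i < 2) x i ^+ m i = x ord0 ^+ m ord0 * x ord_max ^+ m ord_max.
  rewrite !big_ord_recl big_ord0 mulr1.
  by congr (_ * x _ ^+ m _); apply: val_inj.
rewrite x0 x1 hornerZ !hornerM !horner_exp hornerX -{2}(subnK le_m1) exprD.
rewrite expr_div_n; have : s ^+ m ord_max != 0 by rewrite expf_neq0.
(* field would otherwise expand the symbolic powers of s and blow up *)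
by move: (s ^+ m ord_max) (s ^+ (msize f - _)) => X Y hX; field.
Qed.

Lemma poly_eq0_inj_roots (R : idomainType) (p : {poly R}) (r : nat -> R) :
  injective r -> (forall n, root p (r n)) -> p = 0.
Proof.
move=> r_inj pr.
apply: (@roots_geq_poly_eq0 _ _ [seq r n | n <- iota 0 (size p)]).
- by apply/allP => _ /mapP[n _ ->].
- by rewrite map_inj_uniq ?iota_uniq.
- by rewrite size_map size_iota.
Qed.

Definition gap (p : Cx * Cx) : Cx := p.2 - p.1.

Lemma G_fst_mul (p : Cx * Cx) :
  p.1 != 0 -> (G p).1 * p.1 = gap p * (1 + p.1) + p.1 ^+ 2.
Proof. by move=> hp; rewrite /G /gap /=; field. Qed.

Lemma gap_G (p : Cx * Cx) : p.1 != 0 -> gap (G p) = gap p * (G p).1.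
Proof. by move=> hp; rewrite /G /gap /=; field. Qed.

Lemma G_diag (u : Cx) : u != 0 -> G (u, u) = (u, u).
Proof. by move=> hu; rewrite /G /=; congr (_, _); field. Qed.

Lemma exact_period3_on_curve (p : Cx * Cx) :
  exact_period 3 p -> 1 + p.2 + p.1 * p.2 = 0.
Proof.
case=> nz per ne.
have h0 : p.1 != 0 := nz 0%N isT.
have h1 : (G p).1 != 0 := nz 1%N isT.
have h2 : (G (G p)).1 != 0 := nz 2%N isT.
have {}per : G (G (G p)) = p := per.
have ht : gap p != 0.
  apply: contraNneq (ne 1%N isT isT) => /subr0_eq t0.
  have -> : p = (p.1, p.1) by rewrite -{2}t0 -surjective_pairing.
  by rewrite /= G_diag.
have prod1 : p.1 * (G p).1 * (G (G p)).1 = 1.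
  by apply: (mulfI ht); rewrite mulr1 -[in RHS]per !gap_G // per; ring.
have e0 := G_fst_mul h0.
have e1 := G_fst_mul h1; rewrite gap_G // in e1.
have e2 := G_fst_mul h2; rewrite per !gap_G // in e2.
have two_neq0 : 2 != 0 :> Cx by rewrite pnatr_eq0.
have rel := three_cycle_relation two_neq0 ht h1 h2 prod1 e0 e1 e2.
by rewrite -rel [p.1 * (G p).1]mulrC e0 /gap; ring.
Qed.

Definition curve_point (s : Cx) : Cx * Cx := (s - 1, - s^-1).

Lemma G_curve_point (s : Cx) :
  s != 0 -> s != 1 -> G (curve_point s) = curve_point (rot3 s).
Proof.
move=> h0 h1; have h1' : 1 - s != 0 by rewrite subr_eq0 eq_sym.
rewrite /G /curve_point /rot3 /=.
by congr (_, _); field; rewrite h1' subr_eq0 h1 h0.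
Qed.

Lemma curve_point_inj : injective curve_point.
Proof. by move=> a b /(congr1 fst)/addIr. Qed.

Lemma iter_G_curve_point (s : Cx) k : s != 0 -> s != 1 ->
  iter k G (curve_point s) = curve_point (iter k rot3 s).
Proof.
elim: k s => [//|k IH] s h0 h1.
by rewrite !iterSr G_curve_point // IH ?rot3_neq0 ?rot3_neq1.
Qed.

Lemma exact_period3_curve_point (s : Cx) :
  s != 0 -> s != 1 -> s ^+ 2 - s + 1 != 0 -> exact_period 3 (curve_point s).
Proof.
move=> h0 h1 hfix.
have moved : rot3 s != s by apply: contra_neq hfix; apply: rot3_fixed.
have moved2 : rot3 (rot3 s) != s.
  by apply: contra_neq moved => /(congr1 (@rot3 _)); rewrite rot3_cycle.
split=> [k|| k]; rewrite iter_G_curve_point //.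
- by case: k => [|[|[|]]] //= _; rewrite subr_eq0 ?rot3_neq1 ?rot3_neq0.
- by rewrite /= rot3_cycle.
- by rewrite (inj_eq curve_point_inj); case: k => [|[|[|]]].
Qed.

Lemma exact_period3_natr n : exact_period 3 (curve_point n.+2%:R).
Proof.
apply: exact_period3_curve_point; rewrite ?pnatr_eq0 ?pnatr_eq1 //.
have -> : n.+2%:R ^+ 2 - n.+2%:R + 1 = (n.+2 * n.+1).+1%:R :> Cx by ring.
by rewrite pnatr_eq0.
Qed.

Lemma meval_curve_point_eq0 (f : {mpoly Cx[2]}) :
  (forall n, f.@[pt (curve_point n.+2%:R)] = 0) ->
  forall s, s != 0 -> f.@[pt (curve_point s)] = 0.
Proof.
move=> vanish s hs.
have horner_clear t : t != 0 ->
    (clear_pole f ('X - 1) (-1)).[t] = t ^+ msize f * f.@[pt (curve_point t)].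
  move=> ht; apply: horner_clear_pole => //;
    by rewrite /pt /= !hornerE ?mulNr ?mul1r.
have clear0 : clear_pole f ('X - 1) (-1) = 0.
  apply: (@poly_eq0_inj_roots _ _ (fun n => n.+2%:R)) => [m n /eqP|n].
    by rewrite eqr_nat => /eqP [].
  by rewrite /root horner_clear ?pnatr_eq0 // vanish mulr0.
move: (horner_clear s hs); rewrite clear0 horner0 => /esym/eqP.
by rewrite mulf_eq0 expf_eq0 (negbTE hs) andbF => /eqP.
Qed.

Lemma on_curve_curve_point (x : Cx * Cx) : 1 + x.2 + x.1 * x.2 = 0 ->
  1 + x.1 != 0 /\ x = curve_point (1 + x.1).
Proof.
case: x => u v /= hx; have hs : 1 + u != 0.
  apply/eqP => s0; move: hx.
  have -> : 1 + v + u * v = 1 + v * (1 + u) by ring.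
  by rewrite s0 mulr0 addr0 => /eqP; rewrite oner_eq0.
split=> //; rewrite /curve_point addrAC subrr add0r.
congr (_, _); apply: (mulIf hs); rewrite mulNr mulVf // -[RHS]sub0r -hx; ring.
Qed.

Definition curve_mpoly : {mpoly Cx[2]} := 1 + 'X_ord_max + 'X_ord0 * 'X_ord_max.

Lemma meval_curve_mpoly (p : Cx * Cx) :
  curve_mpoly.@[pt p] = 1 + p.2 + p.1 * p.2.
Proof. by rewrite /curve_mpoly !(mevalD, mevalM, mevalXU, meval1). Qed.

Theorem mainTheorem5 :
  (forall p : Cx * Cx, exact_period 3 p -> 1 + p.2 + p.1 * p.2 = 0) /\
  (forall x : Cx * Cx,
     zariski_closure (exact_period 3) x <-> 1 + x.2 + x.1 * x.2 = 0).
Proof.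
split=> [|x]; first exact: exact_period3_on_curve.
split=> [in_closure | on_curve f vanish].
  rewrite -meval_curve_mpoly; apply: in_closure => p /exact_period3_on_curve.
  by rewrite meval_curve_mpoly.
have [hs ->] := on_curve_curve_point on_curve.
by apply: meval_curve_point_eq0 hs => n; apply/vanish/exact_period3_natr.
Qed.
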